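(* Let $\Omega\subseteq\mathbb R^N$ be an open bounded set, $K\in L^\infty(\Omega\times B_1)$ with $\lambda\le K\le\Lambda$ on $\Omega\times B_1$ for some $0<\lambda\le\Lambda$, and let $u\in L^1(B_1(\Omega))\cap C^{Dini}_{loc}(\Omega)\cap C(\overline\Omega)$ satisfy $L_Ku\le0$ in $\Omega$ and $u\le0$ on $\mathbb R^N\setminus\Omega$. Then $u\le0$ in $\Omega$.
   Context: $B_1(\Omega):=\bigcup_{x\in\Omega}B_1(x)$. $C^{Dini}_{loc}(\Omega)$: functions that on every closed ball contained in $\Omega$ admit a modulus of continuity $\omega$ with $\int_0^1\omega(\rho)\rho^{-1}d\rho<\infty$. $L_Ku(x):=\int_{B_1(x)}\frac{u(x)-u(y)}{|y-x|^N}K(x,y-x)\,dy$ for $x\in\Omega$. *)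

From HB Require Import structures.
From mathcomp Require Import all_boot all_order all_algebra.
From mathcomp Require Import all_classical all_reals all_analysis.
Set Implicit Arguments. Unset Strict Implicit. Unset Printing Implicit Defensive.
Import Order.TTheory GRing.Theory Num.Theory.
Import numFieldNormedType.Exports.
Local Open Scope classical_set_scope.
Local Open Scope ring_scope.

(* R^N is modelled as N.-tuple R, which MathComp-Analysis equips with the
   product (= Borel) sigma-algebra generated by the coordinate projections. *)
Section Euclid.
Context {R : realType} {N : nat}.
Notation V := (N.-tuple R).

Definition tsub (x y : V) : V := [tuple tnth x i - tnth y i | i < N].

Definition edist (x y : V) : R :=
  Num.sqrt (\sum_(i < N) (tnth x i - tnth y i) ^+ 2).

Definition eball (x : V) (r : R) : set V := [set y | edist x y < r].
Definition ecball (x : V) (r : R) : set V := [set y | edist x y <= r].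

Definition eopen (A : set V) : Prop :=
  forall x, A x -> exists2 r : R, 0 < r & eball x r `<=` A.
Definition ebounded (A : set V) : Prop :=
  exists M : R, forall x y, A x -> A y -> edist x y <= M.
Definition eclosure (A : set V) : set V :=
  [set x | forall r : R, 0 < r -> exists2 y, A y & edist x y < r].

Definition B1 (A : set V) : set V := \bigcup_(x in A) eball x 1.

Definition econt_on (A : set V) (u : V -> R) : Prop :=
  forall x, A x -> forall e : R, 0 < e ->
    exists2 d : R, 0 < d & forall y, A y -> edist x y < d -> `|u x - u y| < e.

Definition dini_modulus (w : R -> R) : Prop :=
  [/\ forall r, 0 <= r -> 0 <= w r,
      forall r s, 0 <= r -> r <= s -> w r <= w s &
      (\int[@lebesgue_measure R]_(r in `]0%R, 1%R]) (w r / r)%:E < +oo)%E].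

Definition dini_loc (A : set V) (u : V -> R) : Prop :=
  forall (c : V) (r : R), 0 < r -> ecball c r `<=` A ->
    exists w : R -> R, dini_modulus w /\
      forall x y, ecball c r x -> ecball c r y -> `|u x - u y| <= w (edist x y).

End Euclid.

(* N-dimensional Lebesgue measure on N.-tuple R, defined by iterating the
   one-dimensional Lebesgue measure (Tonelli / Cavalieri):
   leb_0 = Dirac mass at the empty tuple,
   leb_{n+1}(A) = int_R leb_n {t | (x :: t) in A} dx. *)
Fixpoint lebN (R : realType) (n : nat) : set (n.-tuple R) -> \bar R :=
  match n return set (n.-tuple R) -> \bar R with
  | 0 => fun A => ((asbool (A [tuple]))%:R)%:E
  | n'.+1 => fun A =>
      (\int[@lebesgue_measure R]_x @lebN R n' [set t : n'.-tuple R | A (cons_tuple (x : R) t)])%E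
  end.

Definition LK {R : realType} {N : nat} (K : N.-tuple R -> N.-tuple R -> R)
  (u : N.-tuple R -> R) (x : N.-tuple R) : \bar R :=
  (\int[@lebN R N]_(y in eball x 1) ((u x - u y) / edist y x ^+ N * K x (tsub y x))%:E)%E.

(* Suppose u > 0 somewhere in Omega.  Since u is continuous on the compact set
   cl(Omega) and u <= 0 off Omega, u attains a positive global maximum M at
   some x0 in Omega.  There the integrand of L_K u(x0) is nonnegative, and if
   u(y) < M for some y in B_1(x0), continuity gives a small cube around y on
   which u stays below some b < M, so the integrand is at least
   (M - b) * lambda there and L_K u(x0) > 0.  Hence u = M on all of B_1(x0):
   the set {u = M}, contained in Omega, is stable under unit balls, and
   stepping by 1/2 along a coordinate axis leaves the bounded set Omega.
   Only the continuity of u on cl(Omega) and the lower bound on K are needed. *)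

From Pilot Require Import Defs.
From HB Require Import structures.
From mathcomp Require Import all_boot all_order all_algebra.
From mathcomp Require Import all_classical all_reals all_analysis.
From mathcomp Require Import lra ring.
Import Order.TTheory GRing.Theory Num.Theory.
Import numFieldNormedType.Exports.
Import HBNNSimple.
(* [Defs.edist] is shadowed by the extended distance of MathComp-Analysis. *)
Import Defs.
Set Implicit Arguments. Unset Strict Implicit. Unset Printing Implicit Defensive.
Local Open Scope classical_set_scope.
Local Open Scope ring_scope.

Definition cube {R : realType} {n : nat} (y : n.-tuple R) (s : R) : set (n.-tuple R) :=
  [set t | forall i, `|tnth t i - tnth y i| < s].

Section euclidean_distance.
Context {R : realType} {N : nat}.
Notation V := (N.-tuple R).
Implicit Types (x y z : V) (r s : R) (Omega : set V).

Lemma sum_sqr_ge0 x y : 0 <= \sum_(i < N) (tnth x i - tnth y i) ^+ 2.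
Proof. by apply: sumr_ge0 => i _; rewrite sqr_ge0. Qed.

Lemma edistC x y : edist x y = edist y x.
Proof. by rewrite /edist; congr Num.sqrt; apply: eq_bigr => i _; rewrite -sqrrN opprB. Qed.

Lemma edistxx x : edist x x = 0.
Proof. by rewrite /edist big1 ?sqrtr0 // => i _; rewrite subrr expr0n. Qed.

Lemma coord_le_edist x y i : `|tnth x i - tnth y i| <= edist x y.
Proof.
rewrite -sqrtr_sqr /edist ler_sqrt ?sum_sqr_ge0 // (bigD1 i) //= lerDl.
by apply: sumr_ge0 => j _; rewrite sqr_ge0.
Qed.

Lemma edist_eq0 x y : edist x y = 0 -> x = y.
Proof.
move=> xy0; apply: eq_from_tnth => i; have := coord_le_edist x y i.
by rewrite xy0 normr_le0 subr_eq0 => /eqP.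
Qed.

Lemma edist_tsub x z : edist (nseq_tuple N 0) (tsub z x) = edist x z.
Proof.
rewrite /edist; congr Num.sqrt; apply: eq_bigr => i _.
by rewrite tnth_nseq /tsub tnth_mktuple sub0r sqrrN -sqrrN opprB.
Qed.

Lemma edist_lt_sqr x y r : 0 < r ->
  (edist x y < r) = (\sum_(i < N) (tnth x i - tnth y i) ^+ 2 < r ^+ 2).
Proof.
by move=> r0; rewrite -{1}(ger0_norm (ltW r0)) -sqrtr_sqr ltr_sqrt ?exprn_gt0.
Qed.

Lemma cube_edist_lt y s x : (0 < N)%N -> cube y s x -> edist x y < s * N%:R.
Proof.
move=> N0 xy; have s0 : 0 < s by apply: le_lt_trans (xy (Ordinal N0)).
have Npos : 0 < (N%:R : R) by rewrite ltr0n.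
rewrite edist_lt_sqr ?mulr_gt0 //.
apply: (@lt_le_trans _ _ (\sum_(i < N) s ^+ 2)).
  apply: ltr_sum; first by apply/hasP; exists (Ordinal N0); rewrite ?mem_index_enum.
  by move=> i _; rewrite -real_normK ?num_real // ltrXn2r // (le_lt_trans _ (xy i)).
rewrite sumr_const card_ord exprMn -[_ *+ N]mulr_natr ler_pM2l ?exprn_gt0 //.
by rewrite expr2 ler_peMl ?ler1n // ltW.
Qed.

Lemma sqrD_lt a d r s : `|a| <= r -> `|d| < s -> s <= r ->
  (a + d) ^+ 2 < a ^+ 2 + 3 * r * s.
Proof.
move=> ar ds sr; have ad : a * d <= `|a| * `|d| by rewrite -normrM ler_norm.
have d2 : d ^+ 2 = `|d| ^+ 2 by rewrite real_normK ?num_real.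
have := normr_ge0 a; have := normr_ge0 d.
rewrite sqrrD d2 !expr2; move: ad ar ds; set A := `|a|; set D := `|d|; nra.
Qed.

Lemma eball_cube x y r : (0 < N)%N -> edist x y < r ->
  exists2 s, 0 < s & cube y s `<=` eball x r.
Proof.
move=> N0 xy; have r0 : 0 < r by apply: le_lt_trans xy; apply: sqrtr_ge0.
have Npos : 0 < (N%:R : R) by rewrite ltr0n.
move: (xy); rewrite edist_lt_sqr //; set e2 := \sum_(i < N) _ => e2r.
pose s := Num.min r ((r ^+ 2 - e2) / (3 * r * N%:R)).
have s0 : 0 < s by rewrite lt_min r0 divr_gt0 ?subr_gt0 ?mulr_gt0.
exists s => // z zy; rewrite /eball /= edist_lt_sqr //.
apply: (@lt_le_trans _ _ (\sum_(i < N) ((tnth x i - tnth y i) ^+ 2 + 3 * r * s))).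
  apply: ltr_sum; first by apply/hasP; exists (Ordinal N0); rewrite ?mem_index_enum.
  move=> i _; rewrite -[tnth x i - _](subrKA (tnth y i)).
  apply: sqrD_lt; first exact: ltW (le_lt_trans (coord_le_edist x y i) xy).
    by rewrite distrC; apply: zy.
  by rewrite ge_min lexx.
rewrite big_split /= sumr_const card_ord -/e2 -mulr_natr.
have : s <= (r ^+ 2 - e2) / (3 * r * N%:R) by rewrite ge_min lexx orbT.
by rewrite ler_pdivlMr ?mulr_gt0 // => ?; lra.
Qed.

Lemma subset_eclosure Omega : Omega `<=` eclosure Omega.
Proof. by move=> y Oy r r0; exists y; rewrite ?edistxx. Qed.

Definition shift (i : 'I_N) x c : V := [tuple tnth x j + (if j == i then c else 0) | j < N].

Lemma tnth_shift i x c : tnth (shift i x c) i = tnth x i + c.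
Proof. by rewrite tnth_mktuple eqxx. Qed.

Lemma edist_shift i x c : edist x (shift i x c) = `|c|.
Proof.
rewrite /edist (bigD1 i) //= big1 ?addr0.
  by rewrite tnth_shift opprD addrA subrr sub0r sqrrN sqrtr_sqr.
by move=> j /negbTE ji; rewrite tnth_mktuple ji addr0 subrr expr0n.
Qed.

End euclidean_distance.

Section lebesgue_N.
Context {R : realType}.

Lemma lebN_set0 n : @lebN R n set0 = 0%E.
Proof.
elim: n => [|n IH] /=; first by rewrite asboolF.
transitivity (\int[@lebesgue_measure R]_x (cst 0%E x))%E; last by rewrite integral0.
by apply: eq_integral => x _; rewrite -IH.
Qed.

Lemma forall_ordS n (P : 'I_n.+1 -> Prop) :
  (forall i, P i) <-> P ord0 /\ (forall i : 'I_n, P (lift ord0 i)).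
Proof.
split=> [h|[h0 h] i]; first by split.
by case: (unliftP ord0 i) => [j ->|->].
Qed.

Lemma cube_cons n (y : n.-tuple R) y0 x t s :
  cube [tuple of y0 :: y] s (cons_tuple x t) <-> `|x - y0| < s /\ cube y s t.
Proof.
rewrite /cube /= forall_ordS !tnth0.
by split=> -[? h]; split=> // i; move: (h i); rewrite !tnthS.
Qed.

Lemma lebN_cube n (y : n.-tuple R) s : 0 < s -> @lebN R n (cube y s) = ((2 * s) ^+ n)%:E.
Proof.
move=> s0; elim: n y => [|n IH] y /=; first by rewrite asboolT // => -[].
rewrite [y]tuple_eta; set y0 := thead y; set y' := [tuple of behead y].
pose I : set R := [set` `]y0 - s, y0 + s[].
transitivity (\int[@lebesgue_measure R]_x (((cst ((2 * s) ^+ n)%:E) \_ I) x))%E.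
  apply: eq_integral => x _; rewrite /patch; case: ifPn => [|/negP];
    rewrite inE /I /= in_itv /= -ltr_distlC distrC => xy0.
    rewrite -(IH y'); congr lebN.
    by apply/seteqP; split=> t /= => [/cube_cons[] //|?]; apply/cube_cons.
  change point with (0 : \bar R)%E; rewrite -(lebN_set0 n); congr lebN.
  by apply/seteqP; split=> t //= /cube_cons[].
rewrite -integral_mkcond integral_cst /=; last exact: measurable_itv.
rewrite lebesgue_measure_itv /= ifT; last by rewrite lte_fin; lra.
by rewrite -EFinD -EFinM exprS mulrC; congr (_ * _)%:E; lra.
Qed.

Lemma cube_measurable n (y : n.-tuple R) s : measurable (cube y s).
Proof.
have -> : cube y s = \bigcap_(i in [set` enum 'I_n])
    ((@tnth n R ^~ i) @^-1` [set` `]tnth y i - s, tnth y i + s[]).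
  apply/seteqP; split=> t /=.
    by move=> h i _ /=; rewrite in_itv /= -ltr_distlC distrC.
  by move=> h i; have := h i; rewrite /= mem_enum in_itv /= -ltr_distlC distrC; apply.
rewrite bigcap_seq; apply: bigsetI_measurable => i _.
by rewrite -[X in measurable X]setTI; apply: measurable_tnth => //; exact: measurable_itv.
Qed.

End lebesgue_N.

(* [lebN] is not known to be a measure, so the lower bound below is proved from
   the definition of the integral, for any set function vanishing on [set0]. *)
Section integral_set_function.
Context d (T : measurableType d) (R : realType).
Variable mu : set T -> \bar R.
Hypothesis mu0 : mu set0 = 0%E.
Local Open Scope ereal_scope.

Lemma sintegral_eq0 (h : T -> R) : (forall x, h x = 0%R) -> sintegral mu h = 0.
Proof.
move=> h0; apply: fsbig1 => r _; have [->|r0] := eqVneq r 0%R; first by rewrite mul0e.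
by rewrite preimage10 ?mu0 ?mule0 // => -[x _ hx]; move: r0; rewrite -hx h0 eqxx.
Qed.

Lemma sintegral_cst_indic (A : set T) (c : R) : c != 0%R ->
  sintegral mu (fun x => c * (x \in A)%:R)%R = c%:E * mu A.
Proof.
move=> c0; rewrite /sintegral -(fsbig_widen [set c] setT) //= ?fsbig_set1; last first.
  move=> r [_ /= rc]; have [->|r0] := eqVneq r 0%R; first by rewrite mul0e.
  rewrite preimage10 ?mu0 ?mule0 // => -[x _].
  by case: (x \in A); rewrite ?mulr1 ?mulr0 => // /esym; move: r0 => /eqP.
congr (_ * mu _); apply/seteqP; split=> x /=; last by move=> Ax; rewrite mem_set ?mulr1.
by case: (boolP (x \in A)); rewrite ?inE // mulr0 => _ /eqP; rewrite eq_sym (negbTE c0).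
Qed.

Lemma cst_measure_le_integral (D C : set T) (f : T -> R) (c : R) :
  measurable C -> (0 < c)%R -> C `<=` D ->
  (forall x, D x -> 0 <= f x)%R -> (forall x, C x -> c <= f x)%R ->
  c%:E * mu C <= \int[mu]_(x in D) (f x)%:E.
Proof.
move=> mC c0 CD f0 fc.
have fD0 x : 0 <= ((fun y => (f y)%:E) \_ D) x.
  by rewrite /patch; case: ifPn => // /[!inE] /f0; rewrite lee_fin.
rewrite /integral; set P := ereal_sup _; set Q := ereal_sup _.
have Q0 : Q <= 0.
  apply: ge_ereal_sup => _ [h hneg <-].
  suff h0 x : h x = 0%R by rewrite sintegral_eq0.
  apply/le_anti; rewrite fun_ge0 andbT -lee_fin (le_trans (hneg x)) //.
  by rewrite funenegE max_r // oppe_le0.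
suff cP : c%:E * mu C <= P by apply: le_trans cP (leeDl _ _); rewrite oppe_ge0.
apply: ereal_sup_ubound; exists (scale_nnsfun (indic_nnsfun R mC) (ltW c0)).
  move=> x /=; rewrite funeposE measurable_realfun.mindicE le_max; apply/orP; left.
  rewrite /patch; case: (boolP (x \in C)) => xC; last by rewrite mulr0; apply: fD0.
  rewrite ifT; last by rewrite inE; apply: CD; rewrite -inE.
  by rewrite mulr1 lee_fin; apply: fc; rewrite -inE.
rewrite -(sintegral_cst_indic _ (lt0r_neq0 c0)); apply: eq_sintegral => x /=.
by rewrite measurable_realfun.mindicE.
Qed.

End integral_set_function.

Section max_on_closure.
Context {R : realType} {N : nat}.
Notation V := (N.-tuple R).
Implicit Types (x y z : V) (v w : 'rV[R]_N) (Omega : set V).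

Definition tuple_of_row v : V := [tuple v ord0 i | i < N].
Definition row_of_tuple x : 'rV[R]_N := \row_i tnth x i.

Lemma row_of_tupleK : cancel row_of_tuple tuple_of_row.
Proof. by move=> x; apply: eq_from_tnth => i; rewrite tnth_mktuple mxE. Qed.

Lemma tuple_of_rowK : cancel tuple_of_row row_of_tuple.
Proof. by move=> v; apply/rowP => i; rewrite mxE tnth_mktuple. Qed.

Lemma coord_le_mx_norm v i : `|v ord0 i| <= `|v|.
Proof.
rewrite -[`|v|]/(mx_norm v) mx_normrE.
exact: (le_bigmax _ (fun ij : 'I_1 * 'I_N => `|v ij.1 ij.2|) (ord0, i)).
Qed.

Lemma mx_norm_row_le_edist x y : `|row_of_tuple x - row_of_tuple y| <= edist x y.
Proof.
rewrite -[`|_|]/(mx_norm _) mx_normrE.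
apply: bigmax_le => [|[i j] _]; first exact: sqrtr_ge0.
by rewrite ord1 !mxE; apply: coord_le_edist.
Qed.

Lemma edist_lt_mx_norm_row x y s : (0 < N)%N ->
  `|row_of_tuple x - row_of_tuple y| < s -> edist x y < s * N%:R.
Proof.
move=> N0 xy; apply: cube_edist_lt => // i; apply: le_lt_trans xy.
by have := coord_le_mx_norm (row_of_tuple x - row_of_tuple y) i; rewrite !mxE.
Qed.

Lemma eclosure_rows_bounded Omega x1 : ebounded Omega -> Omega x1 ->
  bounded_set [set v | eclosure Omega (tuple_of_row v)].
Proof.
move=> [M OM] Ox1; exists (1 + M + `|row_of_tuple x1|); split; first exact: num_real.
move=> B MB v /= /(_ 1 ltr01) [z Oz vz]; apply: le_trans (ltW MB).
set rz := row_of_tuple z; set rx := row_of_tuple x1.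
have vrz : `|v - rz| <= 1.
  by rewrite -[v]tuple_of_rowK; apply: le_trans (mx_norm_row_le_edist _ _) (ltW vz).
have rzx : `|rz - rx| <= M := le_trans (mx_norm_row_le_edist _ _) (OM _ _ Oz Ox1).
have -> : v = v - rz + (rz - rx) + rx by rewrite addrA !subrK.
have := ler_normD (v - rz + (rz - rx)) rx; have := ler_normD (v - rz) (rz - rx); lra.
Qed.

Lemma eclosure_rows_closed Omega : (0 < N)%N ->
  closed [set v | eclosure Omega (tuple_of_row v)].
Proof.
move=> N0 v clv r r0; have Npos : 0 < (N%:R : R) by rewrite ltr0n.
pose s := r / (2 * N%:R); have s0 : 0 < s by rewrite divr_gt0 ?mulr_gt0.
have [w [clw]] := clv _ (nbhsx_ballx v _ s0); rewrite -ball_normE /= => vw.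
have [y Oy wy] := clw s s0; exists y => //.
have -> : r = (2 * s) * N%:R by rewrite /s; field; rewrite lt0r_neq0.
apply: edist_lt_mx_norm_row => //; rewrite tuple_of_rowK.
have wy' := le_lt_trans (mx_norm_row_le_edist _ _) wy; rewrite tuple_of_rowK in wy'.
have := ler_normD (v - w) (w - row_of_tuple y); rewrite addrA subrK; lra.
Qed.

Lemma eclosure_rows_continuous Omega u : (0 < N)%N -> econt_on (eclosure Omega) u ->
  {within [set v | eclosure Omega (tuple_of_row v)], continuous (u \o tuple_of_row)}.
Proof.
move=> N0 uc; have Npos : 0 < (N%:R : R) by rewrite ltr0n.
rewrite continuous_subspace_in => v /[!inE] clv; apply/cvgrPdist_lt => e e0.
have [d d0 ud] := uc _ clv e e0.
rewrite /= -nbhs_subspace_in ?inE //; apply/nbhs_ballP.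
exists (d / N%:R); first by rewrite /= divr_gt0.
move=> w /=; rewrite -ball_normE /= => vw clw; apply: ud => //.
rewrite -(divfK (lt0r_neq0 Npos) d); apply: edist_lt_mx_norm_row => //.
by rewrite !tuple_of_rowK.
Qed.

Lemma econt_max_eclosure Omega u x1 : (0 < N)%N -> ebounded Omega -> Omega x1 ->
  econt_on (eclosure Omega) u ->
  exists2 x0, eclosure Omega x0 & forall y, eclosure Omega y -> u y <= u x0.
Proof.
move=> N0 bO Ox1 uc; set A := [set v | eclosure Omega (tuple_of_row v)].
have A0 : A !=set0.
  by exists (row_of_tuple x1) => r r0; exists x1; rewrite ?row_of_tupleK ?edistxx.
have [v /[!inE] Av vmax] := EVT_max_rV A0
  (bounded_closed_compact (eclosure_rows_bounded bO Ox1) (eclosure_rows_closed N0))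
  (eclosure_rows_continuous N0 uc).
exists (tuple_of_row v) => // y cly.
by rewrite -[y]row_of_tupleK; apply: vmax; rewrite inE /A /= row_of_tupleK.
Qed.

End max_on_closure.

Section strong_maximum.
Context {R : realType} {N : nat}.
Notation V := (N.-tuple R).
Implicit Types (x y z : V) (Omega : set V) (u : V -> R).

Lemma econt_lt_eball Omega u y b : econt_on (eclosure Omega) u ->
  (forall z, ~ Omega z -> u z <= 0) -> 0 < b -> u y < b ->
  exists2 rho, 0 < rho & eball y rho `<=` [set z | u z < b].
Proof.
move=> uc uout b0 yb; have [cly|ncly] := pselect (eclosure Omega y).
  have buy : 0 < b - u y by rewrite subr_gt0.
  have [d d0 ud] := uc y cly _ buy; exists d => // z /= yz.
  have [Oz|nOz] := pselect (Omega z); last exact: le_lt_trans (uout z nOz) b0.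
  by have := ud z (subset_eclosure Oz) yz; rewrite ltr_distlC => /andP[_]; lra.
have [r r0 rO] : exists2 r, 0 < r & forall z, edist y z < r -> ~ Omega z.
  apply: contrapT => nr; apply: ncly => r r0; apply: contrapT => nz.
  by apply: nr; exists r => // z yz Oz; apply: nz; exists z.
by exists r => // z /rO nOz /=; apply: le_lt_trans (uout z nOz) b0.
Qed.

Lemma econt_lt_cube Omega u x0 y r b : (0 < N)%N -> econt_on (eclosure Omega) u ->
  (forall z, ~ Omega z -> u z <= 0) -> 0 < b -> u y < b -> edist x0 y < r ->
  exists2 s, 0 < s & cube y s `<=` eball x0 r `&` [set z | u z < b].
Proof.
move=> N0 uc uout b0 yb x0y; have Npos : 0 < (N%:R : R) by rewrite ltr0n.
have [rho rho0 ub] := econt_lt_eball uc uout b0 yb.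
have [s1 s10 cube1] := eball_cube N0 x0y.
exists (Num.min s1 (rho / N%:R)) => [|z yz]; first by rewrite lt_min s10 divr_gt0.
split; first by apply: cube1 => i; apply: lt_le_trans (yz i) _; rewrite ge_min lexx.
apply: ub; rewrite /eball /= edistC; apply: lt_le_trans (cube_edist_lt N0 yz) _.
by rewrite -ler_pdivlMr // ge_min lexx orbT.
Qed.

Lemma LK_le0_max_eball Omega K lam u x0 : (0 < N)%N -> 0 < lam ->
  (forall z, eball (nseq_tuple N 0) 1 z -> lam <= K x0 z) ->
  econt_on (eclosure Omega) u -> (forall z, ~ Omega z -> u z <= 0) ->
  (forall z, u z <= u x0) -> 0 < u x0 -> (LK K u x0 <= 0)%E ->
  eball x0 1 `<=` [set y | u y = u x0].
Proof.
move=> N0 lam0 Klam uc uout umax M0 LK0 y x0y; apply/eqP; rewrite eq_le umax /=.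
rewrite leNgt; apply/negP => uy.
pose b := Num.max ((u y + u x0) / 2) (u x0 / 2).
have b0 : 0 < b by rewrite lt_max; apply/orP; right; lra.
have bM : b < u x0 by rewrite gt_max; apply/andP; split; lra.
have yb : u y < b by rewrite lt_max; apply/orP; left; lra.
have [s s0 cube_sub] := econt_lt_cube N0 uc uout b0 yb x0y.
have cube_ball : cube y s `<=` eball x0 1 by move=> z /cube_sub[].
have Kball z : eball x0 1 z -> lam <= K x0 (tsub z x0).
  by move=> x0z; apply: Klam; rewrite /eball /= edist_tsub.
pose f z := (u x0 - u z) / edist z x0 ^+ N * K x0 (tsub z x0).
have f0 z : eball x0 1 z -> 0 <= f z.
  move=> x0z; rewrite mulr_ge0 ?divr_ge0 ?subr_ge0 ?exprn_ge0 ?sqrtr_ge0 //.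
  exact: le_trans (ltW lam0) (Kball z x0z).
have f_cube z : cube y s z -> (u x0 - b) * lam <= f z.
  move=> /cube_sub[x0z /= zb].
  have dz0 : 0 < edist z x0.
    rewrite lt_neqAle sqrtr_ge0 andbT; apply/negP => /eqP/esym/edist_eq0 zx0.
    by move: zb; rewrite zx0; lra.
  have dzN1 : edist z x0 ^+ N <= 1.
    by rewrite exprn_ile1 ?sqrtr_ge0 // edistC ltW.
  rewrite /f ler_pM ?subr_ge0 ?(ltW bM) ?(ltW lam0) ?Kball //.
  rewrite ler_pdivlMr ?exprn_gt0 //; apply: le_trans (ler_wpM2l _ dzN1) _; lra.
have c0 : 0 < (u x0 - b) * lam by rewrite mulr_gt0 ?subr_gt0.
have := cst_measure_le_integral (@lebN_set0 R N) (cube_measurable y s) c0 cube_ball f0 f_cube.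
rewrite lebN_cube // -EFinM => /le_trans/(_ LK0); rewrite lee_fin.
by apply/negP; rewrite -ltNge !mulr_gt0 ?subr_gt0 ?exprn_gt0 ?mulr_gt0.
Qed.

Lemma ebounded_eball_closed_eq0 (S : set V) : (0 < N)%N -> ebounded S ->
  (forall z, S z -> eball z 1 `<=` S) -> S = set0.
Proof.
move=> N0 [M SM] Sball; apply/seteqP; split=> // x0 Sx0; pose i := Ordinal N0.
have far k : exists2 z, S z & tnth z i = tnth x0 i + k%:R / 2.
  elim: k => [|k [z Sz zi]]; first by exists x0; rewrite ?mul0r ?addr0.
  exists (shift i z (1 / 2)).
    by apply: (Sball _ Sz); rewrite /eball /= edist_shift ger0_norm; lra.
  by rewrite tnth_shift zi -addn1 natrD; lra.
have [z Sz zi] := far (Num.truncn (2 * M)).+1; have := truncnS_gt (2 * M).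
have := le_trans (coord_le_edist x0 z i) (SM _ _ Sx0 Sz).
by rewrite zi opprD addNKr normrN ger0_norm ?divr_ge0 //; lra.
Qed.

End strong_maximum.

Theorem lemma4p1 (R : realType) (N : nat) (Omega : set (N.-tuple R))
  (K : N.-tuple R -> N.-tuple R -> R) (lam Lam : R) (u : N.-tuple R -> R) :
  (0 < N)%N ->
  eopen Omega -> ebounded Omega ->
  0 < lam -> lam <= Lam ->
  measurable_fun (Omega `*` eball (nseq_tuple N (0 : R)) 1)
    (fun p : N.-tuple R * N.-tuple R => K p.1 p.2) ->
  (forall x z, Omega x -> eball (nseq_tuple N (0 : R)) 1 z ->
     lam <= K x z <= Lam) ->
  measurable_fun (B1 Omega) u ->
  (\int[@lebN R N]_(y in B1 Omega) (`|u y|)%:E < +oo)%E ->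
  dini_loc Omega u ->
  econt_on (eclosure Omega) u ->
  (forall x, Omega x -> (LK K u x <= 0)%E) ->
  (forall x, ~ Omega x -> u x <= 0) ->
  forall x, Omega x -> u x <= 0.
Proof.
move=> N0 _ bO lam0 _ _ Kb _ _ _ uc LK0 uout x Ox; rewrite leNgt; apply/negP => ux.
have [x0 _ x0max] := econt_max_eclosure N0 bO Ox uc.
have M0 : 0 < u x0 := lt_le_trans ux (x0max x (subset_eclosure Ox)).
have inO z : u z = u x0 -> Omega z.
  by move=> uz; apply: contrapT => /uout; rewrite uz; lra.
have umax z : u z <= u x0.
  have [Oz|/uout uz0] := pselect (Omega z); first exact/x0max/subset_eclosure.
  exact: le_trans uz0 (ltW M0).
pose S := [set z | u z = u x0].
suff : S = set0 by move/seteqP => [/(_ x0 erefl)].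
apply: ebounded_eball_closed_eq0 => //.
  by case: bO => M OM; exists M => y z /inO Oy /inO Oz; apply: OM.
move=> z /= uz w zw; have Oz := inO z uz; rewrite /S /= -uz.
have zmax y : u y <= u z by rewrite uz; apply: umax.
have Kz y : eball (nseq_tuple N 0) 1 y -> lam <= K z y by move/(Kb z y Oz)/andP=> [].
by apply: (LK_le0_max_eball N0 lam0 Kz uc uout zmax _ (LK0 z Oz)); rewrite ?uz.
Qed.
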